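(* Let $n\in\mathbb{N}$ and $S_{n,-1}(x)=\sum_{k=0}^n\Big(\binom{n}{k}x^k(1-x)^{n-k}\Big)^2$ for $x\in[0,1]$. Then $$S_{n,-1}^{(2j)}\!\left(\tfrac12\right)>0,\qquad j=0,1,\dots,n.$$
   Context: $S_{n,-1}^{(m)}$ denotes the $m$-th derivative of the polynomial $S_{n,-1}$. *)

From mathcomp Require Import all_boot all_order all_algebra.
Set Implicit Arguments. Unset Strict Implicit. Unset Printing Implicit Defensive.
Import GRing.Theory Num.Theory.
Local Open Scope ring_scope.

Definition S_nm1 (R : realFieldType) (n : nat) : {poly R} :=
  \sum_(k < n.+1) ('C(n, k)%:R *: ('X ^+ k * (1 - 'X) ^+ (n - k))) ^+ 2.

From mathcomp Require Import all_boot all_order all_algebra.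
From mathcomp Require Import ring zify.
Import GRing.Theory Num.Theory.
Local Open Scope ring_scope.

(* By Taylor's formula at 1/2, S^(2j)(1/2) is (2j)! times the coefficient of X^(2j) in
   S(X + 1/2).  With u = X + 1/2 and v = 1/2 - X we have
   S(X + 1/2) = sum_k (C(n,k) u^k v^(n-k))^2 = [Y^n] ((uY + v)(vY + u))^n, and
   (uY + v)(vY + u) = (1/4)(1 + Y)^2 - X^2 (Y - 1)^2, so by the binomial theorem that
   coefficient is C(n,j) 4^(j-n) (-1)^j e(n-j, j) with
   e(p, q) = [Y^(p+q)] (1 + Y)^(2p) (Y - 1)^(2q).
   From (1 + Y)^2 = (Y - 1)^2 + 4Y and an Euler-operator identity, e satisfies two
   recurrences with positive weights that propagate the sign (-1)^q of e(p, q) from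
   e(0, 0) = 1. *)

Section PolyCoefficients.
Variable K : comNzRingType.

Lemma horner_derivn (p : {poly K}) c m :
  (p^`(m)).[c] = (p \Po ('X + c%:P))`_m *+ m`!.
Proof.
have derivn_shift : (p \Po ('X + c%:P))^`(m) = p^`(m) \Po ('X + c%:P).
  elim: m => [|m IHm]; first by rewrite !derivn0.
  by rewrite !derivnS IHm deriv_comp derivD derivX derivC addr0 mulr1.
have := congr1 (horner^~ 0) derivn_shift.
rewrite /= horner_comp hornerD hornerX hornerC add0r => <-.
by rewrite horner_coef0 coef_derivn addn0 ffactnn.
Qed.

Lemma coef_expCXaddC (a b : K) n i : (i <= n)%N ->
  ((a%:P * 'X + b%:P) ^+ n)`_i = a ^+ i * b ^+ (n - i) *+ 'C(n, i).
Proof.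
move=> le_in.
have -> : (a%:P * 'X + b%:P) ^+ n = \poly_(i < n.+1) (a ^+ i * b ^+ (n - i) *+ 'C(n, i)).
  rewrite addrC exprDn poly_def; apply: eq_bigr => k _.
  rewrite -mul_polyC polyCMn polyCM !rmorphXn exprMn -!mulrnAl; ring.
by rewrite coef_poly ltnS le_in.
Qed.

(* Vandermonde's convolution with the two binomials in opposite order. *)
Lemma sum_sqr_binom_terms (u v : K) n :
  \sum_(k < n.+1) (u ^+ k * v ^+ (n - k) *+ 'C(n, k)) ^+ 2 =
  ((u%:P * 'X + v%:P) ^+ n * (v%:P * 'X + u%:P) ^+ n)`_n.
Proof.
rewrite coefM; apply: eq_bigr => [[k /= lt_kn]] _.
have le_kn : (k <= n)%N by rewrite -ltnS.
rewrite !coef_expCXaddC ?leq_subr // subKn // bin_sub //; ring.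
Qed.

End PolyCoefficients.

Section PlusMinusOnePowers.
Variable R : comNzRingType.

Definition pm1_poly (a b : nat) : {poly R} := (1 + 'X) ^+ a * ('X - 1) ^+ b.

Lemma coef_pm1_polyS2l a b i :
  (pm1_poly a.+2 b)`_i.+1 = (pm1_poly a b.+2)`_i.+1 + (pm1_poly a b)`_i *+ 4.
Proof.
have -> : pm1_poly a.+2 b = pm1_poly a b.+2 + ('X * pm1_poly a b) *+ 4.
  rewrite /pm1_poly !exprS; move: ((1 + 'X) ^+ a) (('X - 1) ^+ b) => p q; ring.
by rewrite coefD coefMn coefXM.
Qed.

Lemma pm1_poly_Euler a b :
  ('X * (pm1_poly a.+1 b.+1)^`()) *+ 2 - pm1_poly a.+1 b.+1 *+ (a + b).+2 =
  pm1_poly a b.+2 *+ a.+1 + pm1_poly a.+2 b *+ b.+1.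
Proof.
rewrite /pm1_poly derivM !deriv_exp derivD derivB derivX derivC add0r subr0.
rewrite !exprSr; move: ((1 + 'X) ^+ a) (('X - 1) ^+ b) => p q.
rewrite -[(a + b).+2]addn2 -[a.+1]addn1 -[b.+1]addn1 !mulrnDr; ring.
Qed.

(* 2 X d/dX - (a + b + 2) kills the coefficient of X^(m+1). *)
Lemma coef_pm1_poly_mid a b m : (a + b = 2 * m)%N ->
  (pm1_poly a b.+2)`_m.+1 *+ a.+1 + (pm1_poly a.+2 b)`_m.+1 *+ b.+1 = 0.
Proof.
move=> ab_even; rewrite -!coefMn -coefD -pm1_poly_Euler.
rewrite coefB !coefMn coefXM coef_deriv -mulrnA.
have -> : (m.+1 * 2 = (a + b).+2)%N by lia.
by rewrite subrr.
Qed.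

Definition pm1_mid (p q : nat) : R := (pm1_poly (2 * p) (2 * q))`_(p + q).

Lemma pm1_midSl p q :
  pm1_mid p.+1 q *+ (2 * (p + q).+1) = pm1_mid p q *+ (4 * (2 * p).+1).
Proof.
have mid := coef_pm1_poly_mid (2 * p) (2 * q) (p + q) (esym (mulnDr 2 p q)).
have -> : (2 * (p + q).+1 = (2 * p).+1 + (2 * q).+1)%N by lia.
rewrite /pm1_mid; have -> : (2 * p.+1 = (2 * p).+2)%N by lia.
rewrite addSn mulrnDr {1}coef_pm1_polyS2l.
by rewrite mulrnDl addrAC mid add0r -mulrnA.
Qed.

Lemma pm1_midSr p q :
  pm1_mid p q.+1 *+ (2 * p).+1 = - (pm1_mid p.+1 q *+ (2 * q).+1).
Proof.
have mid := coef_pm1_poly_mid (2 * p) (2 * q) (p + q) (esym (mulnDr 2 p q)).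
rewrite /pm1_mid; have -> : (2 * p.+1 = (2 * p).+2)%N by lia.
have -> : (2 * q.+1 = (2 * q).+2)%N by lia.
by rewrite addSn addnS; apply/eqP; rewrite -addr_eq0 mid.
Qed.

End PlusMinusOnePowers.

Lemma map_pm1_poly {R S : comNzRingType} (f : {rmorphism R -> S}) a b :
  map_poly f (pm1_poly R a b) = pm1_poly S a b.
Proof.
by rewrite /pm1_poly rmorphM !rmorphXn rmorphD rmorphB rmorph1 /= map_polyX.
Qed.

Lemma pm1_mid_sign (R : numDomainType) p q : 0 < (-1) ^+ q * pm1_mid R p q.
Proof.
have signSl r s :
    0 < (-1) ^+ s * pm1_mid R r s -> 0 < (-1) ^+ s * pm1_mid R r.+1 s.
  rewrite -(pmulrn_lgt0 (_ * pm1_mid R r s) (_ : 0 < 4 * (2 * r).+1)%N) //.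
  rewrite -(pmulrn_lgt0 (_ * pm1_mid R r.+1 s) (_ : 0 < 2 * (r + s).+1)%N) //.
  by rewrite -!mulrnAr pm1_midSl.
have signSr r s :
    0 < (-1) ^+ s * pm1_mid R r.+1 s -> 0 < (-1) ^+ s.+1 * pm1_mid R r s.+1.
  rewrite -(pmulrn_lgt0 (_ * pm1_mid R r.+1 s) (ltn0Sn (2 * s))).
  rewrite -(pmulrn_lgt0 (_ * pm1_mid R r s.+1) (ltn0Sn (2 * r))).
  by rewrite -!mulrnAr pm1_midSr exprS mulN1r mulrNN.
elim: q p => [|q IHq] p; last exact/signSr/IHq.
elim: p => [|p IHp]; last exact: signSl.
by rewrite /pm1_mid /pm1_poly !expr0 !mul1r coef1 ltr01.
Qed.

Section CentredSquares.
Variables (K : comNzRingType) (c : K).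
Local Notation u := ('X + c%:P).
Local Notation v := (c%:P - 'X).

(* (uY + v)(vY + u) = c^2 (1 + Y)^2 - X^2 (Y - 1)^2, expanded by the binomial theorem. *)
Lemma centred_sqr_expansion n :
  ((u%:P * 'X + v%:P) ^+ n * (v%:P * 'X + u%:P) ^+ n)`_n =
  \sum_(j < n.+1)
    ((c ^+ (2 * (n - j)) * (-1) ^+ j * (pm1_poly K (2 * (n - j)) (2 * j))`_n
      *+ 'C(n, j)) *: 'X^(2 * j)).
Proof.
rewrite -exprMn.
have -> : (u%:P * 'X + v%:P) * (v%:P * 'X + u%:P) =
    (c ^+ 2)%:P%:P * (1 + 'X) ^+ 2 - ('X ^+ 2)%:P * ('X - 1) ^+ 2.
  by rewrite !rmorphXn !rmorphD !rmorphN; ring.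
rewrite exprBn coef_sum; apply: eq_bigr => j _; rewrite coefMn.
have -> : (-1) ^+ j * ((c ^+ 2)%:P%:P * (1 + 'X) ^+ 2) ^+ (n - j) *
    (('X ^+ 2)%:P * ('X - 1) ^+ 2) ^+ j =
    (((-1) ^+ j * c ^+ (2 * (n - j)))%:P * 'X^(2 * j))%:P *
    pm1_poly {poly K} (2 * (n - j)) (2 * j).
  rewrite /pm1_poly !exprM; move: (n - j)%N => m.
  rewrite !rmorphM !rmorphXn !rmorphN !rmorph1 !exprMn; ring.
rewrite coefCM -(map_pm1_poly polyC) coef_map -mul_polyC !rmorphMn !rmorphM.
ring.
Qed.

Lemma coef_centred_sqr n i : (i <= n)%N ->
  (((u%:P * 'X + v%:P) ^+ n * (v%:P * 'X + u%:P) ^+ n)`_n)`_(2 * i) =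
  c ^+ (2 * (n - i)) * (-1) ^+ i * (pm1_poly K (2 * (n - i)) (2 * i))`_n
    *+ 'C(n, i).
Proof.
move=> le_in; rewrite centred_sqr_expansion coef_sum.
rewrite (bigD1 (Ordinal (le_in : (i < n.+1)%N))) //= coefZ coefXn eqxx mulr1.
rewrite big1 ?addr0 // => k ne_ki; rewrite coefZ coefXn eqn_pmul2l //.
suff /negbTE-> : i != k by rewrite mulr0.
by apply: contraNneq ne_ki => eq_ik; apply/eqP/val_inj.
Qed.
End CentredSquares.

Section ShiftToOneHalf.
Variable R : realFieldType.
Local Notation h := (2^-1 : R).
Local Notation u := ('X + h%:P).
Local Notation v := (h%:P - 'X).

Lemma one_sub_half : 1 - h = h.
Proof. by field. Qed.

Lemma S_nm1_shift n :
  S_nm1 R n \Po u = ((u%:P * 'X + v%:P) ^+ n * (v%:P * 'X + u%:P) ^+ n)`_n.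
Proof.
rewrite -sum_sqr_binom_terms /S_nm1 rmorph_sum; apply: eq_bigr => k _.
rewrite rmorphXn /= comp_polyZ rmorphM /= !rmorphXn /= rmorphB /= rmorph1.
rewrite comp_polyX.
have -> : 1 - u = v by rewrite opprD addrA addrAC -polyC1 -polyCB one_sub_half.
by rewrite scaler_nat.
Qed.

Lemma coef_S_nm1_shift n i : (i <= n)%N ->
  (S_nm1 R n \Po u)`_(2 * i) =
  h ^+ (2 * (n - i)) * ((-1) ^+ i * pm1_mid R (n - i) i) *+ 'C(n, i).
Proof.
by move=> le_in; rewrite S_nm1_shift coef_centred_sqr // /pm1_mid subnK // mulrA.
Qed.

End ShiftToOneHalf.

Theorem mainTheorem5 (R : realFieldType) (n j : nat) :
  (j <= n)%N -> 0 < ((S_nm1 R n)^`(2 * j)).[2^-1].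
Proof.
move=> le_jn; rewrite horner_derivn pmulrn_lgt0 ?fact_gt0 //.
rewrite coef_S_nm1_shift // pmulrn_lgt0 ?bin_gt0 //.
by rewrite mulr_gt0 ?exprn_gt0 ?invr_gt0 ?ltr0n ?pm1_mid_sign.
Qed.
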